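(* For any strict pin words $u$ and $w$, $u\preceq w$ if and only if $\phi(u)$ is a factor of $\phi(w)$.
   Context: Pins are points of $\mathbb{Z}^2$. A pin $p$ separates a set $P$ from a set $Q$ horizontally (resp. vertically) if the horizontal (resp. vertical) line through $p$ has $P$ strictly on one side and $Q$ strictly on the other. A pin sequence is a sequence $(p_1,\dots,p_k)$ of pins, no two in a common row or column, such that for every $i\ge2$, $p_i$ lies outside the bounding box of $\{p_1,\dots,p_{i-1}\}$ and either $p_i$ separates $p_{i-1}$ from $\{p_1,\dots,p_{i-2}\}$ or $p_i$ is independent from $\{p_1,\dots,p_{i-1}\}$. Pin words: given a pin sequence $(p_1,\dots,p_n)$ and an origin $p_0$ such that $(p_0,\dots,p_n)$ is a pin sequence, each $p_i$ ($i\ge1$) is encoded by $U$ (resp. $D,L,R$) if $p_i$ separates $p_{i-1}$ from $\{p_0,\dots,p_{i-2}\}$ and lies above (resp. below, left of, right of) the bounding box of $\{p_0,\dots,p_{i-1}\}$, and by $1$ (resp. $2,3,4$) if $p_i$ is independent from $\{p_0,\dots,p_{i-1}\}$ and lies in the up-right (resp. up-left, bottom-left, bottom-right) corner region of that bounding box; the point $p_i$ is said to correspond to the $i$-th letter. Letters $1,2,3,4$ are numerals, $U,D,L,R$ directions. A strict pin word is a pin word of length $\ge2$ whose first letter is a numeral and all others directions. A point $x$ lies in quadrant $1$ (resp. $2,3,4$) with respect to a set $S$ if it is above and to the right of (resp. above-left, below-left, below-right of) all points of $S$. Order $\preceq$ on pin words: write $u=u^{(1)}\cdots u^{(j)}$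 as a product of strong numeral-led factors (each a numeral followed by any number of directions). Then $u\preceq w$ if $w$ can be written $w=v^{(1)}w^{(1)}\cdots v^{(j)}w^{(j)}v^{(j+1)}$ such that for each $i$: if $w^{(i)}$ begins with a numeral then $w^{(i)}=u^{(i)}$; if $w^{(i)}$ begins with a direction, then $v^{(i)}$ is nonempty, the point $p_k$ corresponding to the first letter of $w^{(i)}$ (in the pin sequence of $w$) lies in the quadrant given by the first letter of $u^{(i)}$ with respect to $\{p_0,\dots,p_{k-2}\}$, and all other letters of $u^{(i)}$ and $w^{(i)}$ agree. For a strict pin word $u=u'u''$ with $|u'|=2$, $\phi(u)=\varphi(u')u''$ with $\varphi$: $1R\mapsto RUR$, $2R\mapsto LUR$, $3R\mapsto LDR$, $4R\mapsto RDR$, $1L\mapsto RUL$, $2L\mapsto LUL$, $3L\mapsto LDL$, $4L\mapsto RDL$, $1U\mapsto URU$, $2U\mapsto ULU$, $3U\mapsto DLU$, $4U\mapsto DRU$, $1D\mapsto URD$, $2D\mapsto ULD$, $3D\mapsto DLD$, $4D\mapsto DRD$. A factor is a contiguous subword. *)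

From Stdlib Require Import ZArith List Lia.
Import ListNotations.
Open Scope Z_scope.

Definition point := (Z * Z)%type.
Definition px (p : point) : Z := fst p.
Definition py (p : point) : Z := snd p.
Definition pset := point -> Prop.

Definition single (a : point) : pset := fun q => q = a.
Definition subset (A B : pset) : Prop := forall q, A q -> B q.
Definition nonempty (A : pset) : Prop := exists q, A q.

Definition sep_h (p : point) (A B : pset) : Prop :=
  ((forall a, A a -> py a > py p) /\ (forall b, B b -> py b < py p)) \/
  ((forall a, A a -> py a < py p) /\ (forall b, B b -> py b > py p)).
Definition sep_v (p : point) (A B : pset) : Prop :=
  ((forall a, A a -> px a > px p) /\ (forall b, B b -> px b < px p)) \/
  ((forall a, A a -> px a < px p) /\ (forall b, B b -> px b > px p)).
Definition separates (p : point) (A B : pset) : Prop := sep_h p A B \/ sep_v p A B.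

Definition independent (p : point) (S : pset) : Prop :=
  ~ exists A B : pset, subset A S /\ subset B S /\ nonempty A /\ nonempty B /\
                       separates p A B.

Definition in_bbox (p : point) (S : pset) : Prop :=
  (exists a b, S a /\ S b /\ px a <= px p <= px b) /\
  (exists c d, S c /\ S d /\ py c <= py p <= py d).

Definition above (p : point) (S : pset) := forall a, S a -> py p > py a.
Definition below (p : point) (S : pset) := forall a, S a -> py p < py a.
Definition leftof (p : point) (S : pset) := forall a, S a -> px p < px a.
Definition rightof (p : point) (S : pset) := forall a, S a -> px p > px a.

Definition in_quadrant (q : nat) (p : point) (S : pset) : Prop :=
  match q with
  | 1%nat => above p S /\ rightof p S
  | 2%nat => above p S /\ leftof p S
  | 3%nat => below p S /\ leftof p S
  | 4%nat => below p S /\ rightof p S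
  | _ => False
  end.

(** Sequences of pins p_0, p_1, ... are functions nat -> point;
    lt_seg P m = {p_0, ..., p_(m-1)} (empty when m = 0). *)
Definition lt_seg (P : nat -> point) (m : nat) : pset :=
  fun q => exists i, (i < m)%nat /\ q = P i.

Definition pin_sequence (P : nat -> point) (n : nat) : Prop :=
  (forall i j, (i <= n)%nat -> (j <= n)%nat -> i <> j ->
      px (P i) <> px (P j) /\ py (P i) <> py (P j)) /\
  (forall i, (1 <= i <= n)%nat ->
      ~ in_bbox (P i) (lt_seg P i) /\
      (separates (P i) (single (P (i - 1)%nat)) (lt_seg P (i - 1)%nat)
       \/ independent (P i) (lt_seg P i))).

Inductive letter := L1 | L2 | L3 | L4 | LU | LD | LL | LR.

Definition is_numeral (l : letter) : Prop :=
  match l with L1 | L2 | L3 | L4 => True | _ => False end.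
Definition is_direction (l : letter) : Prop :=
  match l with LU | LD | LL | LR => True | _ => False end.
Definition numeral_quadrant (l : letter) : nat :=
  match l with L1 => 1 | L2 => 2 | L3 => 3 | L4 => 4 | _ => 0 end.

Definition encodes (P : nat -> point) (i : nat) (l : letter) : Prop :=
  let S := lt_seg P i in
  let sepd := (2 <= i)%nat /\
              separates (P i) (single (P (i - 1)%nat)) (lt_seg P (i - 1)%nat) in
  match l with
  | LU => sepd /\ above (P i) S
  | LD => sepd /\ below (P i) S
  | LL => sepd /\ leftof (P i) S
  | LR => sepd /\ rightof (P i) S
  | _ => independent (P i) S /\ in_quadrant (numeral_quadrant l) (P i) S
  end.

Definition realizes (P : nat -> point) (w : list letter) : Prop :=
  pin_sequence P (length w) /\
  forall i, (1 <= i <= length w)%nat -> encodes P i (nth (i - 1)%nat w L1).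

Definition pin_word (w : list letter) : Prop := exists P, realizes P w.

Definition strict_pin_word (u : list letter) : Prop :=
  pin_word u /\ (2 <= length u)%nat /\
  exists a rest, u = a :: rest /\ is_numeral a /\ Forall is_direction rest.

Definition strong_factor (f : list letter) : Prop :=
  exists a rest, f = a :: rest /\ is_numeral a /\ Forall is_direction rest.

(** Condition on one block: ui = u^(i), v = v^(i), wi = w^(i), and k the index
    (in the pin sequence P of w) of the point corresponding to the first letter
    of w^(i). *)
Definition block_ok (P : nat -> point) (ui v wi : list letter) (k : nat) : Prop :=
  match wi, ui with
  | b :: wrest, a :: urest =>
      (is_numeral b /\ wi = ui) \/
      (is_direction b /\ v <> [] /\
       in_quadrant (numeral_quadrant a) (P k) (lt_seg P (k - 1)%nat) /\
       urest = wrest)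
  | _, _ => False
  end.

(** embeds P us w off : w = v1 w1 ... vj wj v(j+1) matching the blocks us,
    where off letters of the full word precede w. *)
Fixpoint embeds (P : nat -> point) (us : list (list letter)) (w : list letter)
  (off : nat) : Prop :=
  match us with
  | [] => True
  | ui :: us' =>
      exists v wi rest, w = v ++ wi ++ rest /\
        block_ok P ui v wi (off + length v + 1)%nat /\
        embeds P us' rest (off + length v + length wi)%nat
  end.

Definition preceq_wrt (P : nat -> point) (u w : list letter) : Prop :=
  exists us, u = concat us /\ Forall strong_factor us /\ embeds P us w 0.

Definition preceq (u w : list letter) : Prop :=
  exists P, realizes P w /\ preceq_wrt P u w.

Definition varphi (a b : letter) : list letter :=
  match a, b with
  | L1, LR => [LR; LU; LR] | L2, LR => [LL; LU; LR]
  | L3, LR => [LL; LD; LR] | L4, LR => [LR; LD; LR]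
  | L1, LL => [LR; LU; LL] | L2, LL => [LL; LU; LL]
  | L3, LL => [LL; LD; LL] | L4, LL => [LR; LD; LL]
  | L1, LU => [LU; LR; LU] | L2, LU => [LU; LL; LU]
  | L3, LU => [LD; LL; LU] | L4, LU => [LD; LR; LU]
  | L1, LD => [LU; LR; LD] | L2, LD => [LU; LL; LD]
  | L3, LD => [LD; LL; LD] | L4, LD => [LD; LR; LD]
  | _, _ => [a; b] (* not used on strict pin words *)
  end.

Definition phi (u : list letter) : list letter :=
  match u with
  | a :: b :: rest => varphi a b ++ rest
  | _ => u
  end.

Definition factor (f g : list letter) : Prop := exists x y, g = x ++ f ++ y.

From Stdlib Require Import List ZArith Lia.
Import ListNotations.
Open Scope Z_scope.

(* Write phi (a b r) = A B b r, where A and B are the two directions spanning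
   quadrant a, A parallel to b and B perpendicular to it.  In a realization of
   a strict pin word w, the letter of phi w at position n >= 1 is the direction
   in which p_n lies beyond p_0, ..., p_(n-1).  If p_(n+1) lies in quadrant a
   with respect to p_0, ..., p_(n-1) and w continues with directions b b1 at
   that point, the separations performed by p_(n+1) and p_(n+2) force b = B and
   make that letter of phi w equal to A, and conversely.  Hence a
   direction-led block of u starting at letter n of w is exactly an occurrence
   of phi u at position n of phi w; a numeral-led block is the prefix case. *)

Definition beyond (d : letter) (p q : point) : Prop :=
  match d with
  | LU => py p > py q
  | LD => py p < py q
  | LL => px p < px q
  | LR => px p > px q
  | _ => False
  end.

Definition beyond_set (d : letter) (p : point) (S : pset) : Prop :=
  forall q, S q -> beyond d p q.

Definition perp (X Y : letter) : Prop :=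
  match X, Y with
  | (LU | LD), (LL | LR) | (LL | LR), (LU | LD) => True
  | _, _ => False
  end.

Lemma perp_direction X Y : perp X Y -> is_direction X.
Proof. intros H; destruct X, Y; cbn in *; tauto. Qed.

Ltac saturate := repeat match goal with
  | H : forall y : point, ?S y -> _, M : ?S ?x |- _ =>
    let T := type of (H x M) in
    lazymatch goal with _ : T |- _ => fail | _ => pose proof (H x M) end
  end.

Ltac solve_beyond :=
  unfold beyond_set, beyond, separates, sep_h, sep_v in *; cbn in *;
  repeat match goal with
  | H : _ /\ _ |- _ => destruct H
  | H : _ \/ _ |- _ => destruct H
  end; saturate; lia.

(* q separates p from S along the axis of X, so on that axis it lies between
   p and S. *)
Lemma turn_beyond X Y p q (S : pset) s0 :
  perp X Y -> S s0 -> beyond Y q p -> beyond_set Y q S -> separates q (single p) S ->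
  (beyond_set X q S <-> beyond_set X p S) /\ (beyond X p s0 -> beyond_set X p S).
Proof.
  intros HXY Hs0 Hqp HqS Hsep; assert (single p p) by reflexivity.
  split; [split|]; intros HX a Ha;
    destruct X, Y; cbn in HXY; try contradiction; solve_beyond.
Qed.

(* Opposite directions are impossible as T is nonempty; beyond T in two
   perpendicular ones, p would sit in a corner of the bounding box of T and
   separate no two points of T. *)
Lemma beyond_set_unique_of_separates d Z p (T B : pset) r b0 :
  is_direction d -> is_direction Z -> T r -> B b0 -> subset B T ->
  separates p (single r) B -> beyond_set d p T -> beyond_set Z p T -> d = Z.
Proof.
  intros Hd HZ Hr Hb0 HBT Hsep HdT HZT.
  assert (single r r) by reflexivity; assert (T b0) by auto.
  destruct d, Z; cbn in Hd, HZ; try contradiction; try reflexivity; exfalso; solve_beyond.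
Qed.

Lemma beyond_perp_unique X Z d p q :
  perp X d -> perp Z d -> beyond X p q -> beyond Z p q -> X = Z.
Proof. intros; destruct X, Z, d; cbn in *; try contradiction; auto; lia. Qed.

Definition quad_h (a : letter) : letter := match a with L2 | L3 => LL | _ => LR end.
Definition quad_v (a : letter) : letter := match a with L3 | L4 => LD | _ => LU end.
Definition is_horizontal (d : letter) : bool := match d with LL | LR => true | _ => false end.

Definition quad_par (a b : letter) : letter := if is_horizontal b then quad_h a else quad_v a.
Definition quad_perp (a b : letter) : letter := if is_horizontal b then quad_v a else quad_h a.

Lemma varphi_quad a b :
  is_numeral a -> is_direction b -> varphi a b = [quad_par a b; quad_perp a b; b].
Proof. destruct a, b; cbn; intros; try contradiction; reflexivity. Qed.

Lemma perp_quad_perp a b : is_direction b -> perp (quad_perp a b) b.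
Proof. destruct a, b; cbn; auto. Qed.

Lemma perp_quad_par a b : is_direction b -> perp (quad_par a b) (quad_perp a b).
Proof. destruct a, b; cbn; auto. Qed.

Lemma in_quadrant_quad a b p S : is_numeral a -> is_direction b ->
  in_quadrant (numeral_quadrant a) p S <->
  beyond_set (quad_par a b) p S /\ beyond_set (quad_perp a b) p S.
Proof.
  intros Ha Hb; destruct a, b; cbn in *; try contradiction;
    unfold above, below, leftof, rightof, beyond_set, beyond; tauto.
Qed.

Lemma quad_inj a c b : is_numeral a -> is_numeral c ->
  quad_par a b = quad_par c b -> quad_perp a b = quad_perp c b -> a = c.
Proof. destruct a, c, b; cbn; intros; try contradiction; auto; discriminate. Qed.

Lemma phi_quad a b r : is_numeral a -> is_direction b ->
  phi (a :: b :: r) = quad_par a b :: quad_perp a b :: b :: r.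
Proof. intros; cbn; rewrite varphi_quad; auto. Qed.

Lemma phi_app a b r Y : phi (a :: b :: r ++ Y) = phi (a :: b :: r) ++ Y.
Proof. cbn; apply app_assoc. Qed.

Lemma skipn_nth_cons {A} n (l : list A) d :
  (n < length l)%nat -> skipn n l = nth n l d :: skipn (S n) l.
Proof.
  revert n; induction l as [|x l IH]; intros [|n] Hn; cbn in *; try lia; auto.
  apply IH; lia.
Qed.

Lemma skipn_length_app {A} (v l : list A) : skipn (length v) (v ++ l) = l.
Proof. induction v; cbn; auto. Qed.

Lemma lt_seg_lt P i m : (i < m)%nat -> lt_seg P m (P i).
Proof. intros; exists i; auto. Qed.

Lemma lt_seg_le P i m : (i <= m)%nat -> subset (lt_seg P i) (lt_seg P m).
Proof. intros H a [k [Hk ->]]; exists k; split; [lia|auto]. Qed.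

Lemma beyond_set_lt_seg d p P i m :
  (i <= m)%nat -> beyond_set d p (lt_seg P m) -> beyond_set d p (lt_seg P i).
Proof. intros Him H a Ha; apply H; eapply lt_seg_le; eauto. Qed.

Lemma realizes_nth P w n :
  realizes P w -> (n < length w)%nat -> encodes P (S n) (nth n w L1).
Proof.
  intros [_ H] Hn; specialize (H (S n)).
  replace (S n - 1)%nat with n in H by lia; apply H; lia.
Qed.

Section StrictRealization.

Variables (P : nat -> point) (c d : letter) (t : list letter).
Hypotheses (HP : realizes P (c :: d :: t)) (Hc : is_numeral c)
  (Hdt : Forall is_direction (d :: t)).

Local Notation w := (c :: d :: t).

Lemma nth_direction n : (1 <= n < length w)%nat -> is_direction (nth n w L1).
Proof.
  intros Hn; destruct n as [|n]; [lia|].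
  change (is_direction (nth n (d :: t) L1)).
  rewrite Forall_forall in Hdt; apply Hdt, nth_In; cbn in *; lia.
Qed.

Lemma letter_separates n : (1 <= n < length w)%nat ->
  separates (P (S n)) (single (P n)) (lt_seg P n) /\
  beyond_set (nth n w L1) (P (S n)) (lt_seg P (S n)).
Proof.
  intros Hn; pose proof (realizes_nth P w n HP ltac:(lia)) as E.
  pose proof (nth_direction n Hn) as Hd.
  destruct (nth n w L1); cbn in Hd, E; try contradiction;
    rewrite Nat.sub_0_r in E; unfold beyond_set, beyond; tauto.
Qed.

Lemma first_quadrant : in_quadrant (numeral_quadrant c) (P 1) (lt_seg P 1).
Proof.
  pose proof (realizes_nth P w 0 HP ltac:(cbn; lia)) as E; cbn in E.
  destruct c; cbn in *; tauto.
Qed.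

Lemma phi_strict : phi w = quad_par c d :: quad_perp c d :: d :: t.
Proof. apply phi_quad; auto; now inversion Hdt. Qed.

Lemma skipn_phi n : (1 <= n)%nat -> skipn (S n) (phi w) = skipn n w.
Proof. intros Hn; rewrite phi_strict; destruct n; [lia|reflexivity]. Qed.

(* [phi w] has one more letter than [w]: its letter [n] sits just before the
   image of the letter [n] of [w]. *)
Lemma phi_letter_beyond n X : (1 <= n < length w)%nat -> perp X (nth n w L1) ->
  beyond_set X (P n) (lt_seg P n) <-> X = nth n (phi w) L1.
Proof.
  intros Hn HX; rewrite phi_strict.
  destruct n as [|[|n]]; [lia| |].
  - pose proof first_quadrant as Q.
    assert (Hd : is_direction d) by now inversion Hdt.
    apply (in_quadrant_quad c d) in Q as [_ Q1]; auto; cbn in *.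
    split; [|now intros ->].
    intros HXP; apply (beyond_perp_unique _ _ d (P 1%nat) (P 0%nat)); auto.
    + apply perp_quad_perp; auto.
    + apply HXP, lt_seg_lt; lia.
    + apply Q1, lt_seg_lt; lia.
  - destruct (letter_separates (S n)) as [Hsep He]; [cbn in *; lia|].
    change (nth (S (S n)) (quad_par c d :: quad_perp c d :: d :: t) L1)
      with (nth (S n) w L1).
    split; [|now intros ->].
    intros HXP.
    apply (beyond_set_unique_of_separates _ _ (P (S (S n))) (lt_seg P (S (S n)))
             (lt_seg P (S n)) (P (S n)) (P 0%nat)); auto.
    + eapply perp_direction; eauto.
    + apply nth_direction; cbn in *; lia.
    + apply lt_seg_lt; lia.
    + apply lt_seg_lt; lia.
    + apply lt_seg_le; lia.
Qed.

Lemma quadrant_iff_letters n a : is_numeral a -> (1 <= n)%nat -> (S n < length w)%nat ->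
  in_quadrant (numeral_quadrant a) (P (S n)) (lt_seg P n) <->
  nth n w L1 = quad_perp a (nth (S n) w L1) /\
  nth n (phi w) L1 = quad_par a (nth (S n) w L1).
Proof.
  intros Ha Hn Hlen.
  set (b := nth n w L1); set (b1 := nth (S n) w L1).
  assert (Hb : is_direction b) by (apply nth_direction; lia).
  assert (Hb1 : is_direction b1) by (apply nth_direction; lia).
  destruct (letter_separates n) as [Hsep HbP]; [lia|].
  destruct (letter_separates (S n)) as [Hsep1 Hb1P]; [lia|].
  assert (H0 : lt_seg P n (P 0%nat)) by (apply lt_seg_lt; lia).
  assert (Hturn : perp (quad_par a b1) b ->
            (beyond_set (quad_par a b1) (P (S n)) (lt_seg P n) <->
             beyond_set (quad_par a b1) (P n) (lt_seg P n))).
  { intros Hperp; apply (turn_beyond _ b _ _ _ (P 0%nat)); auto.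
    - apply HbP, lt_seg_lt; lia.
    - apply (beyond_set_lt_seg _ _ _ _ (S n)); [lia|exact HbP]. }
  rewrite (in_quadrant_quad a b1) by auto.
  split.
  - intros [Q0 Q1].
    assert (Hperp1 : beyond_set (quad_perp a b1) (P (S n)) (lt_seg P (S n))).
    { apply (turn_beyond _ b1 _ (P (S (S n))) _ (P 0%nat)); auto.
      - apply perp_quad_perp; auto.
      - apply lt_seg_lt; lia.
      - apply Hb1P, lt_seg_lt; lia.
      - apply (beyond_set_lt_seg _ _ _ _ (S (S n))); [lia|exact Hb1P]. }
    assert (Hbq : b = quad_perp a b1).
    { apply (beyond_set_unique_of_separates _ _ (P (S n)) (lt_seg P (S n)) (lt_seg P n)
               (P n) (P 0%nat)); auto.
      - eapply perp_direction, perp_quad_perp; auto.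
      - apply lt_seg_lt; lia.
      - apply lt_seg_le; lia. }
    split; [exact Hbq|].
    assert (Hperp : perp (quad_par a b1) b) by (rewrite Hbq; apply perp_quad_par; auto).
    symmetry; apply phi_letter_beyond; [lia|exact Hperp|].
    apply Hturn; auto.
  - intros [Hbq Hphi].
    assert (Hperp : perp (quad_par a b1) b) by (rewrite Hbq; apply perp_quad_par; auto).
    assert (HpP : beyond_set (quad_par a b1) (P n) (lt_seg P n))
      by (apply phi_letter_beyond; auto; lia).
    split; [apply Hturn; auto|].
    rewrite <- Hbq; apply (beyond_set_lt_seg _ _ _ _ (S n)); [lia|exact HbP].
Qed.

Lemma numeral_not_in_directions a : is_numeral a -> ~ In a (d :: t).
Proof.
  intros Ha Hin; rewrite Forall_forall in Hdt.
  apply Hdt in Hin; destruct a; cbn in *; contradiction.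
Qed.

Lemma phi_factor_at n a b b1 r Y : is_numeral a -> is_direction b1 -> (1 <= n)%nat ->
  skipn n w = b :: b1 :: r ++ Y ->
  in_quadrant (numeral_quadrant a) (P (S n)) (lt_seg P n) <->
  skipn n (phi w) = phi (a :: b1 :: r) ++ Y.
Proof.
  intros Ha Hb1 Hn Hskip.
  assert (Hlen : (S n < length w)%nat).
  { pose proof (length_skipn n w) as L; rewrite Hskip in L; simpl length in L |- *; lia. }
  assert (Eb : nth n w L1 = b).
  { rewrite <- (Nat.add_0_r n), <- nth_skipn, Hskip; reflexivity. }
  assert (Eb1 : nth (S n) w L1 = b1).
  { rewrite <- Nat.add_1_r, <- nth_skipn, Hskip; reflexivity. }
  rewrite quadrant_iff_letters, Eb, Eb1 by (auto; lia).
  rewrite (skipn_nth_cons n (phi w) L1) by (rewrite phi_strict; cbn in *; lia).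
  rewrite skipn_phi, Hskip by lia.
  rewrite (phi_quad a b1) by auto; cbn.
  split; [now intros [-> ->]|].
  intros H; injection H as -> ->; auto.
Qed.

Lemma factor_phi_of_block a b1 r v wi rest :
  is_numeral a -> is_direction b1 -> w = v ++ wi ++ rest ->
  block_ok P (a :: b1 :: r) v wi (length v + 1) ->
  factor (phi (a :: b1 :: r)) (phi w).
Proof.
  intros Ha Hb1 Hw Hblock.
  destruct wi as [|b wrest]; [contradiction|].
  destruct Hblock as [[_ Heq] | [_ [Hv [HQ <-]]]].
  - injection Heq as -> ->.
    destruct v as [|x v].
    + exists [], rest; rewrite Hw; apply phi_app.
    + injection Hw as _ Hdt'; exfalso; apply (numeral_not_in_directions a Ha).
      rewrite Hdt'; apply in_or_app; right; left; reflexivity.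
  - set (n := length v) in *.
    assert (Hn : (1 <= n)%nat) by (destruct v; [congruence|cbn; lia]).
    replace (n + 1 - 1)%nat with n in HQ by lia.
    replace (n + 1)%nat with (S n) in HQ by lia.
    apply (phi_factor_at n a b b1 r rest) in HQ; auto.
    + exists (firstn n (phi w)), rest; rewrite <- HQ; symmetry; apply firstn_skipn.
    + rewrite Hw; apply skipn_length_app.
Qed.

Lemma block_of_factor_phi a b1 r :
  is_numeral a -> is_direction b1 -> factor (phi (a :: b1 :: r)) (phi w) ->
  exists v wi rest, w = v ++ wi ++ rest /\
    block_ok P (a :: b1 :: r) v wi (length v + 1).
Proof.
  intros Ha Hb1 [X [Y HXY]].
  destruct X as [|x X].
  - rewrite phi_strict, phi_quad in HXY by auto.
    injection HXY as Hpar Hperp -> ->.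
    rewrite (quad_inj c a b1) by auto.
    exists [], (a :: b1 :: r), Y; split; [reflexivity|]; left; auto.
  - set (n := length (x :: X)).
    assert (Hphi : skipn n (phi w) = phi (a :: b1 :: r) ++ Y)
      by (rewrite HXY; apply skipn_length_app).
    assert (Hw : skipn n w = quad_perp a b1 :: b1 :: r ++ Y).
    { rewrite <- skipn_phi by (cbn; lia).
      change (S n) with (1 + n)%nat; rewrite <- skipn_skipn, Hphi, phi_quad by auto.
      reflexivity. }
    assert (Hlen : length (firstn n w) = n).
    { apply firstn_length_le; pose proof (length_skipn n w) as L.
      rewrite Hw in L; simpl length in L |- *; lia. }
    exists (firstn n w), (quad_perp a b1 :: b1 :: r), Y.
    split; [cbn [app]; rewrite <- Hw; symmetry; apply firstn_skipn|].
    right; split; [eapply perp_direction, perp_quad_perp; auto|].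
    split; [intros E; rewrite E in Hlen; cbn in Hlen; subst n; cbn in Hlen; lia|].
    split; [|reflexivity].
    rewrite Hlen; replace (n + 1 - 1)%nat with n by lia; replace (n + 1)%nat with (S n) by lia.
    apply (phi_factor_at n a (quad_perp a b1) b1 r Y); auto; cbn; lia.
Qed.

End StrictRealization.

Lemma strong_factors_of_strict a r us :
  is_numeral a -> Forall is_direction r ->
  a :: r = concat us -> Forall strong_factor us -> us = [a :: r].
Proof.
  intros Ha Hr Hcat Hus.
  destruct us as [|f us]; [discriminate|].
  inversion Hus as [|? ? [a' [r' [-> [Ha' _]]]] Hus']; subst.
  destruct us as [|g us].
  - cbn in Hcat; rewrite app_nil_r in Hcat; congruence.
  - inversion Hus' as [|? ? [b [s [-> [Hb _]]]] _]; subst.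
    cbn in Hcat; injection Hcat as _ ->.
    rewrite Forall_forall in Hr.
    assert (Hdir : is_direction b) by (apply Hr, in_or_app; right; left; reflexivity).
    destruct b; cbn in *; contradiction.
Qed.

Lemma preceq_wrt_strict P a r w : is_numeral a -> Forall is_direction r ->
  preceq_wrt P (a :: r) w <->
  exists v wi rest, w = v ++ wi ++ rest /\ block_ok P (a :: r) v wi (length v + 1).
Proof.
  intros Ha Hr; split.
  - intros [us [Hcat [Hus Hemb]]].
    rewrite (strong_factors_of_strict a r us) in Hemb by auto.
    destruct Hemb as [v [wi [rest [Hw [Hblock _]]]]]; eauto.
  - intros [v [wi [rest [Hw Hblock]]]].
    exists [a :: r]; split; [cbn; rewrite app_nil_r; reflexivity|].
    split; [repeat constructor; exists a, r; auto|].
    exists v, wi, rest; cbn; auto.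
Qed.

Theorem lemma7 (u w : list letter) :
  strict_pin_word u -> strict_pin_word w ->
  (preceq u w <-> factor (phi u) (phi w)).
Proof.
  intros [_ [Hlu [a [ur [-> [Ha Hur]]]]]] [[P0 HP0] [Hlw [c [t [-> [Hc Ht]]]]]].
  destruct ur as [|b1 r]; [cbn in Hlu; lia|].
  destruct t as [|d t]; [cbn in Hlw; lia|].
  assert (Hb1 : is_direction b1) by now inversion Hur.
  split.
  - intros [P [HP Hprec]].
    apply preceq_wrt_strict in Hprec as [v [wi [rest [Hw Hblock]]]]; auto.
    eapply factor_phi_of_block; eauto.
  - intros Hfactor; exists P0; split; [exact HP0|].
    apply preceq_wrt_strict; auto.
    eapply block_of_factor_phi; eauto.
Qed.
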